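(* There exist two sequences of real numbers $a_k$, $b_k$ whose associated series converge absolutely, and such that, defining $\bar{\Gamma}_1 := \sum_{k =0}^\infty a_k \big(\frac{\gamma^2}{1+\gamma^2}\big)^k$ and $\bar{\Gamma}_2 := \sum_{k =0}^\infty b_k \big(\frac{\gamma^2}{1+\gamma^2}\big)^k$, the functions $\bar{\Gamma}_1$ and $\bar{\Gamma}_2$ solve $4 \gamma \partial_\gamma \bar \Gamma_1 + 6 \bar \Gamma_1 - 13 \bar \Gamma_2 = 0$, $4 \gamma \partial_\gamma \bar \Gamma_2 + 9 \bar\Gamma_2 - \frac{10} {1+\gamma^2}\big(\bar \Gamma_1 + \gamma^2 \frac{2}{\pi}\int_0^\infty \bar \Gamma_1\frac{d\gamma}{1+\gamma^2}\big) = 0$, with $\frac{2}{\pi}\int_0^\infty \bar{\Gamma}_1\frac{d\gamma}{1+\gamma^2} = A$, where $A=-\frac{351}{19}$.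
   Context: $\gamma=\tan\theta\in[0,\infty)$, so $\frac{2}{\pi}\int_0^\infty f\frac{d\gamma}{1+\gamma^2}$ is the angular average over $\theta\in[0,\pi/2]$. This is the profile equation for $\bar\Gamma=\Gamma^*-\Gamma^*(\gamma=0)$ of the (renormalized) angular profile $\Gamma^*$, whose first component has angular average $26$; $A$ is the angular average of $\bar\Gamma_1$. *)

From Stdlib Require Import Reals.
From Coquelicot Require Import Coquelicot.
Open Scope R_scope.

Definition Gbar (c : nat -> R) (g : R) : R :=
  Series (fun k => c k * (g ^ 2 / (1 + g ^ 2)) ^ k).

From Stdlib Require Import Reals Lra Lia Psatz.
From Coquelicot Require Import Coquelicot.
Open Scope R_scope.

(* With x = g^2/(1+g^2) one has g d/dg = 2x(1-x) d/dx and 10/(1+g^2) = 10(1-x), so the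
   profile equations become a linear system of ODEs in x whose only inhomogeneous term
   is 10 A x. Matching power-series coefficients gives a 2x2 recursion whose solution
   decays like k^(-3/2), so the series converge absolutely on [0,1]. The angular
   average of x^k, i.e. 2/pi times the integral of x^k/(1+g^2) over [0,+oo), is the
   Wallis number w_k = (2k-1)!!/(2k)!!; hence the average of Gbar_1 is sum a_k w_k, and
   summing the recursion by parts against w_k shows that this sum is A, for every A. *)

Lemma ex_series_of_le_decrements (u t : nat -> R) :
  (forall n, 0 <= u n) -> (forall n, 0 <= t n) ->
  (forall n, t (S n) + u (S n) <= t n) -> ex_series u.
Proof.
  intros Hu Ht Hstep.
  assert (Hsum : forall n, sum_n u n <= u O + t O - t n).
  { induction n as [|n IH].
    - rewrite sum_O. lra.
    - rewrite sum_Sn. specialize (Hstep n). change (plus ?x ?y) with (x + y). lra. }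
  assert (Hlim : ex_finite_lim_seq (sum_n u)).
  { apply ex_finite_lim_seq_incr with (u O + t O).
    - intros n. rewrite sum_Sn. specialize (Hu (S n)). change (plus ?x ?y) with (x + y). lra.
    - intros n. specialize (Hsum n). specialize (Ht n). lra. }
  destruct Hlim as [l Hl]. exists l. exact Hl.
Qed.

Lemma le_first_of_le_decrements (u t : nat -> R) :
  (forall n, 0 <= u n) -> (forall n, t (S n) + u (S n) <= t n) ->
  forall n, t n <= t O.
Proof.
  intros Hu Hstep n. induction n as [|n IH]; [lra|].
  specialize (Hstep n). specialize (Hu (S n)). lra.
Qed.

Lemma Series_minus_sum_n (a : nat -> R) n :
  ex_series a -> Series a - sum_n a n = Series (fun k => a (S n + k)%nat).
Proof.
  intros Ha. rewrite (Series_incr_n a (S n)) by (lia || exact Ha).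
  simpl pred. rewrite sum_n_Reals. ring.
Qed.

Lemma ex_series_Rabs_mult_bounded (c y : nat -> R) M :
  ex_series (fun k => Rabs (c k)) -> (forall k, Rabs (y k) <= M) ->
  ex_series (fun k => Rabs (c k * y k)).
Proof.
  intros Hc Hy.
  apply (@ex_series_le R_AbsRing R_CompleteNormedModule) with (fun k => Rabs (c k) * M).
  - intros k. change (norm ?x) with (Rabs x). rewrite Rabs_Rabsolu, Rabs_mult.
    apply Rmult_le_compat_l; [apply Rabs_pos|apply Hy].
  - apply ex_series_scal_r, Hc.
Qed.

Lemma Rabs_Series_mult_bounded (c y : nat -> R) M :
  ex_series (fun k => Rabs (c k)) -> (forall k, Rabs (y k) <= M) ->
  Rabs (Series (fun k => c k * y k)) <= Series (fun k => Rabs (c k)) * M.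
Proof.
  intros Hc Hy. rewrite <- Series_scal_r.
  eapply Rle_trans; [apply Series_Rabs, (ex_series_Rabs_mult_bounded c y M Hc Hy)|].
  apply Series_le; [|apply ex_series_scal_r, Hc].
  intros k. split; [apply Rabs_pos|]. rewrite Rabs_mult.
  apply Rmult_le_compat_l; [apply Rabs_pos|apply Hy].
Qed.

Lemma Series_mult_bounded_tail (c y : nat -> R) M n :
  ex_series (fun k => Rabs (c k)) -> (forall k, Rabs (y k) <= M) ->
  Rabs (Series (fun k => c k * y k) - sum_n (fun k => c k * y k) n) <=
  (Series (fun k => Rabs (c k)) - sum_n (fun k => Rabs (c k)) n) * M.
Proof.
  intros Hc Hy.
  pose proof (ex_series_Rabs _ (ex_series_Rabs_mult_bounded c y M Hc Hy)) as Hcy.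
  rewrite (Series_minus_sum_n _ n Hcy), (Series_minus_sum_n _ n Hc).
  apply (Rabs_Series_mult_bounded (fun k => c (S n + k)%nat) (fun k => y (S n + k)%nat)).
  - exact (proj1 (ex_series_incr_n _ (S n)) Hc).
  - intros k. apply Hy.
Qed.

Lemma l1_contraction_2x2 (u v u' v' d al be ga de p q : R) :
  0 < d -> 0 <= p -> d * u' = al * u + be * v -> d * v' = ga * u + de * v ->
  p * (Rabs al + Rabs ga) <= q * d -> p * (Rabs be + Rabs de) <= q * d ->
  p * (Rabs u' + Rabs v') <= q * (Rabs u + Rabs v).
Proof.
  intros Hd Hp Hu Hv Hcol1 Hcol2.
  assert (Hu' : d * Rabs u' <= Rabs al * Rabs u + Rabs be * Rabs v).
  { rewrite <- (Rabs_pos_eq d), <- Rabs_mult, Hu, <- !Rabs_mult by lra. apply Rabs_triang. }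
  assert (Hv' : d * Rabs v' <= Rabs ga * Rabs u + Rabs de * Rabs v).
  { rewrite <- (Rabs_pos_eq d), <- Rabs_mult, Hv, <- !Rabs_mult by lra. apply Rabs_triang. }
  pose proof (Rabs_pos u). pose proof (Rabs_pos v).
  apply Rmult_le_reg_l with d; [exact Hd|]. nra.
Qed.

Lemma CV_radius_ge_1 (c : nat -> R) :
  ex_series (fun k => Rabs (c k)) -> Rbar_le 1 (CV_radius c).
Proof.
  intros Hc. destruct (Rbar_le_lt_dec 1 (CV_radius c)) as [|Hlt]; [assumption|].
  exfalso. apply (CV_disk_outside c 1); [rewrite Rabs_R1; exact Hlt|].
  apply is_lim_seq_ext with c; [intros n; rewrite pow1; ring|].
  exact (ex_series_lim_0 c (ex_series_Rabs c Hc)).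
Qed.

Lemma Rabs_lt_CV_radius (c : nat -> R) x :
  ex_series (fun k => Rabs (c k)) -> Rabs x < 1 -> Rbar_lt (Rabs x) (CV_radius c).
Proof.
  intros Hc Hx. apply Rbar_lt_le_trans with 1; [exact Hx|]. exact (CV_radius_ge_1 c Hc).
Qed.

Lemma PSeries_euler (c : nat -> R) x :
  x * PSeries (PS_derive c) x = PSeries (fun n => INR n * c n) x.
Proof.
  rewrite <- PSeries_incr_1. apply PSeries_ext.
  intros [|n]; simpl; [symmetry; apply Rmult_0_l|reflexivity].
Qed.

Lemma is_pseries_PSeries (c : nat -> R) x :
  ex_series (fun k => Rabs (c k)) -> Rabs x < 1 -> is_pseries c x (PSeries c x).
Proof.
  intros Hc Hx. apply PSeries_correct, CV_radius_inside, Rabs_lt_CV_radius; assumption.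
Qed.

Lemma is_pseries_euler (c : nat -> R) x :
  ex_series (fun k => Rabs (c k)) -> Rabs x < 1 ->
  is_pseries (fun n => INR n * c n) x (PSeries (fun n => INR n * c n) x).
Proof.
  intros Hc Hx. apply PSeries_correct.
  eapply ex_pseries_ext;
    [|apply ex_pseries_incr_1, ex_pseries_derive, Rabs_lt_CV_radius; eassumption].
  intros [|n]; simpl; [symmetry; apply Rmult_0_l|reflexivity].
Qed.

Lemma is_pseries_lin (c d : nat -> R) x lc ld al be :
  is_pseries c x lc -> is_pseries d x ld ->
  is_pseries (fun n => al * c n + be * d n) x (al * lc + be * ld).
Proof.
  rewrite !is_pseries_R. intros Hc Hd.
  pose proof (is_series_plus _ _ _ _ (is_series_scal al _ _ Hc) (is_series_scal be _ _ Hd)) as H.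
  eapply is_series_ext; [|exact H].
  intros n. unfold plus, scal; simpl. unfold mult; simpl. ring.
Qed.

Lemma is_pseries_0 (c : nat -> R) x l :
  (forall n, c n = 0) -> is_pseries c x l -> l = 0.
Proof.
  intros H0 Hc. rewrite <- (is_pseries_unique c x l Hc), <- (PSeries_const_0 x).
  apply PSeries_ext, H0.
Qed.

Definition xi (g : R) : R := g ^ 2 / (1 + g ^ 2).

Lemma one_plus_sqr_pos g : 0 < 1 + g ^ 2.
Proof. nra. Qed.

Lemma xi_range g : 0 <= xi g < 1.
Proof.
  unfold xi. pose proof (one_plus_sqr_pos g).
  split; [apply Rdiv_le_0_compat; nra|].
  apply Rmult_lt_reg_r with (1 + g ^ 2); [lra|]. field_simplify; lra.
Qed.

Lemma Rabs_xi_lt_1 g : Rabs (xi g) < 1.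
Proof. pose proof (xi_range g). rewrite Rabs_pos_eq; lra. Qed.

Lemma xi_pow_range k g : 0 <= xi g ^ k <= 1.
Proof.
  pose proof (xi_range g). induction k as [|k IH]; simpl; nra.
Qed.

Lemma Gbar_PSeries (c : nat -> R) g : Gbar c g = PSeries c (xi g).
Proof. reflexivity. Qed.

Lemma is_derive_xi g : is_derive xi g (2 * g / (1 + g ^ 2) ^ 2).
Proof.
  pose proof (one_plus_sqr_pos g). unfold xi. auto_derive; [lra|]. field. lra.
Qed.

Lemma is_derive_Gbar (c : nat -> R) g :
  ex_series (fun k => Rabs (c k)) ->
  is_derive (Gbar c) g (2 * g / (1 + g ^ 2) ^ 2 * PSeries (PS_derive c) (xi g)).
Proof.
  intros Hc.
  exact (is_derive_comp (PSeries c) xi g _ _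
           (is_derive_PSeries c (xi g) (Rabs_lt_CV_radius c _ Hc (Rabs_xi_lt_1 g)))
           (is_derive_xi g)).
Qed.

Lemma Gbar_euler (c : nat -> R) g :
  ex_series (fun k => Rabs (c k)) ->
  4 * g * Derive (Gbar c) g = 8 * (1 - xi g) * PSeries (fun n => INR n * c n) (xi g).
Proof.
  intros Hc. rewrite (is_derive_unique _ _ _ (is_derive_Gbar c g Hc)), <- PSeries_euler.
  pose proof (one_plus_sqr_pos g). unfold xi. field. lra.
Qed.

Fixpoint wallis (k : nat) : R :=
  match k with
  | O => 1
  | S m => wallis m * (2 * INR m + 1) / (2 * INR m + 2)
  end.

Lemma wallis_range k : 0 < wallis k <= 1.
Proof.
  induction k as [|k IH]; simpl; [lra|].
  pose proof (pos_INR k).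
  split; [apply Rdiv_lt_0_compat; nra|].
  apply Rmult_le_reg_r with (2 * INR k + 2); [lra|]. field_simplify; nra.
Qed.

Lemma wallis_sqr_le k : (2 * INR k + 1) * wallis k ^ 2 <= 1.
Proof.
  induction k as [|k IH]; [simpl; lra|].
  cbn [wallis]. rewrite S_INR. pose proof (pos_INR k). set (w := wallis k) in *.
  replace ((2 * (INR k + 1) + 1) * (w * (2 * INR k + 1) / (2 * INR k + 2)) ^ 2)
    with ((2 * INR k + 1) * w ^ 2 * ((2 * INR k + 1) * (2 * INR k + 3) / (2 * INR k + 2) ^ 2))
    by (field; lra).
  assert (Hq : (2 * INR k + 1) * (2 * INR k + 3) / (2 * INR k + 2) ^ 2 <= 1).
  { apply Rmult_le_reg_r with ((2 * INR k + 2) ^ 2); [nra|]. field_simplify; nra. }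
  assert (0 <= (2 * INR k + 1) * w ^ 2) by nra.
  assert (0 <= (2 * INR k + 1) * (2 * INR k + 3) / (2 * INR k + 2) ^ 2)
    by (apply Rdiv_le_0_compat; nra).
  nra.
Qed.

Lemma is_lim_seq_wallis : is_lim_seq wallis 0.
Proof.
  apply is_lim_seq_spec. intros eps.
  destruct (INR_unbounded (/ (eps * eps))) as [N HN].
  exists N. intros n Hn. rewrite Rminus_0_r.
  pose proof (wallis_range n) as Hw. pose proof (wallis_sqr_le n) as Hsq.
  pose proof (cond_pos eps) as He.
  assert (HnN : INR N <= INR n) by (apply le_INR; exact Hn).
  assert (Hinv : 1 < eps * eps * INR n).
  { apply Rmult_lt_reg_l with (/ (eps * eps)); [apply Rinv_0_lt_compat; nra|].
    rewrite <- Rmult_assoc, Rinv_l, Rmult_1_l, Rmult_1_r by nra. lra. }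
  rewrite Rabs_pos_eq by lra.
  destruct (Rlt_or_le (wallis n) eps) as [|Hge]; [assumption|].
  exfalso. assert (eps * eps <= wallis n ^ 2) by nra. nra.
Qed.

Definition wallis_integrand (k : nat) (g : R) : R := xi g ^ k / (1 + g ^ 2).

Definition wallis_boundary (k : nat) (g : R) : R := g / (1 + g ^ 2) * xi g ^ k.

(* [wallis_tail k b] is the integral of [wallis_integrand k] over [b, +oo);
   the recursion is the integration by parts behind [is_derive_wallis_boundary]. *)
Fixpoint wallis_tail (k : nat) (b : R) : R :=
  match k with
  | O => PI / 2 - atan b
  | S m => ((2 * INR m + 1) * wallis_tail m b + wallis_boundary m b) / (2 * INR m + 2)
  end.

Lemma is_derive_wallis_boundary k (g : R) :
  is_derive (wallis_boundary k) g
    ((2 * INR k + 1) * wallis_integrand k g - (2 * INR k + 2) * wallis_integrand (S k) g).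
Proof.
  pose proof (one_plus_sqr_pos g).
  unfold wallis_boundary, wallis_integrand, xi. auto_derive; [lra|].
  assert (1 + g * g <> 0) by nra.
  destruct k as [|k]; [cbn [Init.Nat.pred pow INR]; field; auto|].
  rewrite S_INR. cbn [Init.Nat.pred pow]. unfold Rdiv.
  set (P := (g * (g * 1) * / (1 + g * (g * 1))) ^ k). field. auto.
Qed.

Lemma continuous_wallis_integrand k (g : R) : continuous (wallis_integrand k) g.
Proof.
  apply (@ex_derive_continuous R_AbsRing R_NormedModule).
  pose proof (one_plus_sqr_pos g). unfold wallis_integrand, xi. auto_derive. lra.
Qed.

Lemma is_RInt_atan b : is_RInt (fun g => / (1 + g ^ 2)) 0 b (atan b).
Proof.
  replace (atan b) with (minus (atan b) (atan 0))
    by (rewrite atan_0; unfold minus, plus, opp; simpl; ring).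
  apply (is_RInt_derive (V := R_CompleteNormedModule)).
  - intros g _. replace (1 + g ^ 2) with (1 + g²) by (unfold Rsqr; ring). apply is_derive_atan.
  - intros g _. apply (@ex_derive_continuous R_AbsRing R_NormedModule).
    pose proof (one_plus_sqr_pos g). auto_derive. lra.
Qed.

Lemma atan_le_id y : 0 <= y -> atan y <= y.
Proof.
  intros Hy.
  apply (is_RInt_le (fun g => / (1 + g ^ 2)) (fun _ => 1) 0 y); [exact Hy|apply is_RInt_atan| |].
  - replace y with (scal (y - 0) 1) at 2 by (unfold scal; simpl; unfold mult; simpl; ring).
    apply (is_RInt_const (V := R_NormedModule)).
  - intros g _. pose proof (one_plus_sqr_pos g).
    rewrite <- Rinv_1. apply Rinv_le_contravar; nra.
Qed.

Lemma div_one_plus_sqr_le_atan y : 0 <= y -> y / (1 + y ^ 2) <= atan y.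
Proof.
  intros Hy.
  apply (is_RInt_le (fun g => (1 - g ^ 2) / (1 + g ^ 2) ^ 2) (fun g => / (1 + g ^ 2)) 0 y);
    [exact Hy| |apply is_RInt_atan|].
  - replace (y / (1 + y ^ 2)) with (minus (y / (1 + y ^ 2)) (0 / (1 + 0 ^ 2)))
      by (unfold minus, plus, opp; simpl; field; pose proof (one_plus_sqr_pos y); lra).
    apply (is_RInt_derive (V := R_CompleteNormedModule) (fun g => g / (1 + g ^ 2)));
      intros g _; pose proof (one_plus_sqr_pos g).
    + auto_derive; [lra|]. field. lra.
    + apply (@ex_derive_continuous R_AbsRing R_NormedModule). auto_derive. nra.
  - intros g _. pose proof (one_plus_sqr_pos g).
    apply Rmult_le_reg_r with ((1 + g ^ 2) ^ 2); [nra|]. field_simplify; nra.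
Qed.

Lemma atan_complement_bounds b :
  0 < b -> b / (1 + b ^ 2) <= PI / 2 - atan b <= / b.
Proof.
  intros Hb. rewrite <- atan_inv by exact Hb.
  assert (Hib : 0 <= / b) by (left; apply Rinv_0_lt_compat, Hb).
  split; [|exact (atan_le_id _ Hib)].
  replace (b / (1 + b ^ 2)) with (/ b / (1 + (/ b) ^ 2)) by (field; repeat split; nra).
  exact (div_one_plus_sqr_le_atan _ Hib).
Qed.

Lemma wallis_boundary_range k b :
  0 <= b -> 0 <= wallis_boundary k b <= PI / 2 - atan b.
Proof.
  intros Hb. unfold wallis_boundary.
  pose proof (one_plus_sqr_pos b). pose proof (xi_pow_range k b).
  assert (Hq : 0 <= b / (1 + b ^ 2)) by (apply Rdiv_le_0_compat; lra).
  destruct (Req_dec b 0) as [->|Hb0].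
  - rewrite atan_0. pose proof PI_RGT_0. unfold Rdiv. rewrite !Rmult_0_l. lra.
  - pose proof (atan_complement_bounds b ltac:(lra)). nra.
Qed.

Lemma wallis_tail_range k b :
  0 <= b -> 0 <= wallis_tail k b <= PI / 2 - atan b.
Proof.
  intros Hb. induction k as [|k IH]; simpl wallis_tail.
  - pose proof (atan_bound b). lra.
  - pose proof (pos_INR k). pose proof (wallis_boundary_range k b Hb).
    split.
    + apply Rdiv_le_0_compat; nra.
    + apply Rmult_le_reg_r with (2 * INR k + 2); [lra|]. field_simplify; nra.
Qed.

Lemma is_RInt_wallis k b :
  is_RInt (wallis_integrand k) 0 b (wallis k * (PI / 2) - wallis_tail k b).
Proof.
  induction k as [|k IH].
  - simpl. replace (1 * (PI / 2) - (PI / 2 - atan b)) with (atan b) by ring.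
    eapply is_RInt_ext; [|apply is_RInt_atan].
    intros g _. unfold wallis_integrand. simpl. field. pose proof (one_plus_sqr_pos g). lra.
  - pose proof (pos_INR k) as Hk.
    pose proof (is_RInt_derive (V := R_CompleteNormedModule) (wallis_boundary k) _ 0 b
                  (fun g _ => is_derive_wallis_boundary k g)
                  (fun g _ => continuous_minus _ _ g
                     (continuous_scal_r _ _ g (continuous_wallis_integrand k g))
                     (continuous_scal_r _ _ g (continuous_wallis_integrand (S k) g)))) as Hparts.
    pose proof (is_RInt_scal _ _ _ (/ (2 * INR k + 2)) _
                  (is_RInt_minus _ _ _ _ _ _ (is_RInt_scal _ _ _ (2 * INR k + 1) _ IH) Hparts))
      as Hcomb.
    eapply is_RInt_ext in Hcomb.
    + replace (wallis (S k) * (PI / 2) - wallis_tail (S k) b) with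
        (scal (/ (2 * INR k + 2))
           (minus (scal (2 * INR k + 1) (wallis k * (PI / 2) - wallis_tail k b))
                  (minus (wallis_boundary k b) (wallis_boundary k 0)))).
      * exact Hcomb.
      * unfold scal, minus, plus, opp; simpl. unfold mult; simpl.
        unfold wallis_boundary. simpl. field; repeat split; nra.
    + intros g _. unfold scal, minus, plus, opp; simpl. unfold mult; simpl. field. lra.
Qed.

Lemma is_RInt_gen_at_p_infty (f F : R -> R) L :
  (forall b, 0 <= b -> is_RInt f 0 b (F b)) ->
  filterlim F (Rbar_locally p_infty) (locally L) ->
  is_RInt_gen f (at_point 0) (Rbar_locally p_infty) L.
Proof.
  intros HF Hlim P HP. destruct (Hlim P HP) as [M HM].
  apply Filter_prod with (fun a => a = 0) (fun b => Rmax M 0 < b).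
  - reflexivity.
  - exists (Rmax M 0). tauto.
  - intros a b -> Hb. pose proof (Rmax_l M 0). pose proof (Rmax_r M 0).
    exists (F b). split; [apply HF; lra|apply HM; lra].
Qed.

Lemma Rabs_Gbar_minus_sum_n (c : nat -> R) g n :
  ex_series (fun k => Rabs (c k)) ->
  Rabs (Gbar c g - sum_n (fun k => c k * xi g ^ k) n)
  <= Series (fun k => Rabs (c k)) - sum_n (fun k => Rabs (c k)) n.
Proof.
  intros Hc. rewrite <- (Rmult_1_r (Series _ - sum_n _ n)).
  apply (Series_mult_bounded_tail c (fun k => xi g ^ k) 1 n Hc).
  intros k. pose proof (xi_pow_range k g). rewrite Rabs_pos_eq; lra.
Qed.

Lemma filterlim_Gbar_partial_sums (c : nat -> R) :
  ex_series (fun k => Rabs (c k)) ->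
  filterlim (fun n g => sum_n (fun k => c k * wallis_integrand k g) n) eventually
    (@locally (fct_UniformSpace R R_CompleteNormedModule) (fun g => Gbar c g / (1 + g ^ 2))).
Proof.
  intros Hc.
  apply (proj2 (filterlim_locally (U := fct_UniformSpace R R_CompleteNormedModule) _ _)).
  intros eps.
  assert (Hlim : is_lim_seq (sum_n (fun k => Rabs (c k))) (Series (fun k => Rabs (c k))))
    by exact (Series_correct _ Hc).
  generalize (proj2 (is_lim_seq_spec _ _) Hlim eps). apply filter_imp. intros n Hn g.
  change (Rabs (sum_n (fun k => c k * wallis_integrand k g) n - Gbar c g / (1 + g ^ 2)) < eps).
  pose proof (one_plus_sqr_pos g).
  assert (Hsum : sum_n (fun k => c k * wallis_integrand k g) n
                 = sum_n (fun k => c k * xi g ^ k) n / (1 + g ^ 2)).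
  { transitivity (mult (sum_n (fun k => c k * xi g ^ k) n) (/ (1 + g ^ 2))); [|reflexivity].
    rewrite <- (sum_n_mult_r (K := R_Ring)). apply sum_n_ext. intros k.
    unfold wallis_integrand, mult; simpl. unfold Rdiv. ring. }
  rewrite Hsum.
  replace (_ / (1 + g ^ 2) - Gbar c g / (1 + g ^ 2))
    with ((sum_n (fun k => c k * xi g ^ k) n - Gbar c g) / (1 + g ^ 2)) by (field; lra).
  rewrite Rabs_div, (Rabs_pos_eq (1 + g ^ 2)), Rabs_minus_sym by lra.
  apply Rle_lt_trans with (Rabs (Gbar c g - sum_n (fun k => c k * xi g ^ k) n)).
  - apply Rle_div_l; [lra|].
    pose proof (Rabs_pos (Gbar c g - sum_n (fun k => c k * xi g ^ k) n)). nra.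
  - pose proof (Rabs_Gbar_minus_sum_n c g n Hc). apply Rabs_def2 in Hn. lra.
Qed.

Lemma is_RInt_Gbar (c : nat -> R) b :
  ex_series (fun k => Rabs (c k)) -> 0 <= b ->
  is_RInt (fun g => Gbar c g / (1 + g ^ 2)) 0 b
    (PI / 2 * Series (fun k => c k * wallis k) - Series (fun k => c k * wallis_tail k b)).
Proof.
  intros Hc Hb.
  assert (Hw : forall k, Rabs (wallis k) <= 1).
  { intros k. pose proof (wallis_range k). rewrite Rabs_pos_eq; lra. }
  assert (HT : forall k, Rabs (wallis_tail k b) <= PI / 2 - atan b).
  { intros k. pose proof (wallis_tail_range k b Hb). rewrite Rabs_pos_eq; lra. }
  set (J k := wallis k * (PI / 2) - wallis_tail k b).
  assert (Hpart : forall n, is_RInt (fun g => sum_n (fun k => c k * wallis_integrand k g) n) 0 b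
                                    (sum_n (fun k => c k * J k) n)).
  { induction n as [|n IH].
    - rewrite sum_O. apply (is_RInt_ext (fun g => c O * wallis_integrand O g));
        [intros g _; rewrite sum_O; reflexivity|].
      exact (is_RInt_scal _ _ _ _ _ (is_RInt_wallis O b)).
    - rewrite sum_Sn.
      apply (is_RInt_ext (fun g => plus (sum_n (fun k => c k * wallis_integrand k g) n)
                                        (c (S n) * wallis_integrand (S n) g)));
        [intros g _; rewrite sum_Sn; reflexivity|].
      exact (is_RInt_plus _ _ _ _ _ _ IH (is_RInt_scal _ _ _ _ _ (is_RInt_wallis (S n) b))). }
  assert (Hser : is_series (fun k => c k * J k)
                   (PI / 2 * Series (fun k => c k * wallis k)
                    - Series (fun k => c k * wallis_tail k b))).
  { apply (is_series_ext
             (fun k => plus (scal (PI / 2) (c k * wallis k)) (opp (c k * wallis_tail k b)))).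
    - intros k. unfold J, plus, scal, opp; simpl. unfold mult; simpl. ring.
    - apply (is_series_minus (K := R_AbsRing) (V := R_NormedModule));
        [apply (is_series_scal_l (K := R_AbsRing) (V := R_NormedModule))|];
        apply Series_correct, ex_series_Rabs.
      + exact (ex_series_Rabs_mult_bounded c wallis 1 Hc Hw).
      + exact (ex_series_Rabs_mult_bounded c _ _ Hc HT). }
  destruct (filterlim_RInt _ 0 b eventually eventually_filter _ _ Hpart
              (filterlim_Gbar_partial_sums c Hc)) as [I [HI HR]].
  replace (PI / 2 * _ - _) with I; [exact HR|].
  exact (filterlim_locally_unique _ _ _ HI Hser).
Qed.

Lemma is_RInt_gen_Gbar (c : nat -> R) :
  ex_series (fun k => Rabs (c k)) ->
  is_RInt_gen (fun g => Gbar c g / (1 + g ^ 2)) (at_point 0) (Rbar_locally p_infty)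
    (PI / 2 * Series (fun k => c k * wallis k)).
Proof.
  intros Hc. apply (is_RInt_gen_at_p_infty _ _ _ (fun b Hb => is_RInt_Gbar c b Hc Hb)).
  apply (proj2 (filterlim_locally _ _)). intros eps.
  set (S := Series (fun k => Rabs (c k))).
  pose proof (cond_pos eps) as He.
  exists (Rmax 0 (S / eps)). intros b Hb.
  pose proof (Rmax_l 0 (S / eps)). pose proof (Rmax_r 0 (S / eps)).
  assert (Hb0 : 0 < b) by lra.
  assert (HT : forall k, Rabs (wallis_tail k b) <= / b).
  { intros k. pose proof (wallis_tail_range k b ltac:(lra)).
    pose proof (atan_complement_bounds b Hb0). rewrite Rabs_pos_eq; lra. }
  pose proof (Rabs_Series_mult_bounded c _ _ Hc HT) as Hbound.
  change (Rabs (PI / 2 * Series (fun k => c k * wallis k) - Series (fun k => c k * wallis_tail k b)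
                - PI / 2 * Series (fun k => c k * wallis k)) < eps).
  replace (PI / 2 * _ - _ - _) with (- Series (fun k => c k * wallis_tail k b)) by ring.
  rewrite Rabs_Ropp. apply (Rle_lt_trans _ _ _ Hbound). fold S.
  assert (HS : S < b * eps) by (apply Rlt_div_l; lra).
  apply Rlt_div_l; lra.
Qed.

Section Coefficients.

Variable A : R.

Definition source (m : nat) : R := match m with O => 10 * A | S _ => 0 end.

Definition cramer_det (m : nat) : R := (8 * INR m + 14) * (8 * INR m + 17) - 130.

(* (a_(m+1), b_(m+1)) solves by Cramer's rule the 2x2 system saying that the
   coefficients of x^(m+1) vanish in [profile_eq_a] and [profile_eq_b]; the
   inhomogeneous term 10 A x contributes [source]. *)
Fixpoint coef (k : nat) : R * R :=
  match k with
  | O => (0, 0)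
  | S m =>
      let (p, q) := coef m in
      let r1 := 8 * INR m * p in
      let r2 := 8 * INR m * q - 10 * p + source m in
      (((8 * INR m + 17) * r1 + 13 * r2) / cramer_det m,
       (10 * r1 + (8 * INR m + 14) * r2) / cramer_det m)
  end.

Definition coef_a (k : nat) : R := fst (coef k).
Definition coef_b (k : nat) : R := snd (coef k).

Lemma cramer_det_pos m : 0 < cramer_det m.
Proof. unfold cramer_det. pose proof (pos_INR m). nra. Qed.

Lemma coef_S m :
  coef_a (S m) = ((8 * INR m + 17) * (8 * INR m * coef_a m)
                  + 13 * (8 * INR m * coef_b m - 10 * coef_a m + source m)) / cramer_det m /\
  coef_b (S m) = (10 * (8 * INR m * coef_a m)
                  + (8 * INR m + 14) * (8 * INR m * coef_b m - 10 * coef_a m + source m))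
                 / cramer_det m.
Proof. unfold coef_a, coef_b. simpl. destruct (coef m). split; reflexivity. Qed.

Lemma coef_a_rec n :
  (8 * INR n + 6) * coef_a n - 13 * coef_b n = 8 * PS_incr_1 (fun k => INR k * coef_a k) n.
Proof.
  destruct n as [|m]; [cbn -[INR]; ring|].
  destruct (coef_S m) as [-> ->]. pose proof (cramer_det_pos m).
  simpl PS_incr_1. rewrite S_INR. unfold cramer_det in *. field. lra.
Qed.

Lemma coef_b_rec n :
  (8 * INR n + 9) * coef_b n - 10 * coef_a n =
  8 * PS_incr_1 (fun k => INR k * coef_b k) n - 10 * PS_incr_1 coef_a n + PS_incr_1 source n.
Proof.
  destruct n as [|m]; [cbn -[INR]; ring|].
  destruct (coef_S m) as [-> ->]. pose proof (cramer_det_pos m).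
  simpl PS_incr_1. rewrite S_INR. unfold cramer_det in *. field. lra.
Qed.

Definition coef_u (k : nat) : R := coef_a k + 13 / 3 * coef_b k.

Definition coef_size (k : nat) : R := Rabs (coef_u k) + Rabs (coef_b k).

Lemma coef_ub_S m : (1 <= m)%nat ->
  cramer_det m * coef_u (S m) =
    (64 * (INR m + 1) ^ 2 + 8 * (INR m + 1) - 2426 / 3) * coef_u m + 28730 / 9 * coef_b m /\
  cramer_det m * coef_b (S m) =
    -140 * coef_u m + (64 * (INR m + 1) ^ 2 - 16 * (INR m + 1) + 1676 / 3) * coef_b m.
Proof.
  intros Hm. assert (Hs : source m = 0) by (destruct m; [lia|reflexivity]).
  unfold coef_u. destruct (coef_S m) as [-> ->]. rewrite Hs.
  pose proof (cramer_det_pos m). unfold cramer_det in *. split; field; lra.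
Qed.

(* In the basis (u, b) the one-step matrix is diag(1 - 7/(4m), 1 - 17/(8m)) + O(1/m^2);
   both rates exceed 3/2, so the size is O(m^(-3/2)). *)
Lemma coef_size_step m : (99 <= m)%nat ->
  (2 * INR m + 3) * coef_size (S m) <= 2 * INR m * coef_size m.
Proof.
  intros Hm. destruct (coef_ub_S m ltac:(lia)) as [Eu Eb].
  assert (HK : 100 <= INR m + 1).
  { replace 100 with (INR 99 + 1) by (simpl; lra). apply Rplus_le_compat_r, le_INR, Hm. }
  pose proof (cramer_det_pos m) as Hd.
  assert (Hdet : cramer_det m = 64 * (INR m + 1) ^ 2 + 120 * (INR m + 1) - 76)
    by (unfold cramer_det; ring).
  apply (l1_contraction_2x2 _ _ _ _ _ _ _ _ _ (2 * INR m + 3) (2 * INR m) Hd ltac:(lra) Eu Eb);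
    rewrite Hdet; set (K := INR m + 1) in *;
    replace (INR m) with (K - 1) by (unfold K; ring).
  - rewrite (Rabs_pos_eq (64 * K ^ 2 + 8 * K - 2426 / 3)) by nra.
    rewrite Rabs_left by lra. nra.
  - rewrite (Rabs_pos_eq (64 * K ^ 2 - 16 * K + 1676 / 3)) by nra.
    rewrite Rabs_pos_eq by lra. nra.
Qed.

Lemma coef_size_nonneg k : 0 <= coef_size k.
Proof.
  unfold coef_size. pose proof (Rabs_pos (coef_u k)). pose proof (Rabs_pos (coef_b k)). lra.
Qed.

Definition coef_moment (k : nat) : R := 2 * INR k * coef_size k.

Lemma coef_moment_step m : (99 <= m)%nat ->
  coef_moment (S m) + coef_size (S m) <= coef_moment m.
Proof.
  intros Hm. pose proof (coef_size_step m Hm). unfold coef_moment. rewrite S_INR. lra.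
Qed.

Lemma ex_series_coef_size : ex_series coef_size.
Proof.
  apply (ex_series_incr_n coef_size 99).
  apply (ex_series_of_le_decrements _ (fun n => coef_moment (99 + n))).
  - intros n. apply coef_size_nonneg.
  - intros n. unfold coef_moment.
    pose proof (pos_INR (99 + n)). pose proof (coef_size_nonneg (99 + n)). nra.
  - intros n. rewrite Nat.add_succ_r. apply coef_moment_step. lia.
Qed.

Lemma coef_moment_le n : (99 <= n)%nat -> coef_moment n <= coef_moment 99.
Proof.
  intros Hn. replace n with (99 + (n - 99))%nat by lia.
  apply (le_first_of_le_decrements (fun k => coef_size (99 + k)) (fun k => coef_moment (99 + k))).
  - intros k. apply coef_size_nonneg.
  - intros k. rewrite Nat.add_succ_r. apply coef_moment_step. lia.
Qed.

Lemma Rabs_coef_a_le k : Rabs (coef_a k) <= 13 / 3 * coef_size k.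
Proof.
  unfold coef_size. replace (coef_a k) with (coef_u k - 13 / 3 * coef_b k) by (unfold coef_u; ring).
  eapply Rle_trans; [apply Rabs_triang|].
  rewrite Rabs_Ropp, Rabs_mult, (Rabs_pos_eq (13 / 3)) by lra.
  pose proof (Rabs_pos (coef_u k)). lra.
Qed.

Lemma Rabs_coef_b_le k : Rabs (coef_b k) <= coef_size k.
Proof. unfold coef_size. pose proof (Rabs_pos (coef_u k)). lra. Qed.

Lemma ex_series_Rabs_coef_a : ex_series (fun k => Rabs (coef_a k)).
Proof.
  apply (@ex_series_le R_AbsRing R_CompleteNormedModule) with (fun k => 13 / 3 * coef_size k).
  - intros k. change (norm ?x) with (Rabs x). rewrite Rabs_Rabsolu. apply Rabs_coef_a_le.
  - apply (ex_series_scal_l (K := R_AbsRing) (V := R_NormedModule)), ex_series_coef_size.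
Qed.

Lemma ex_series_Rabs_coef_b : ex_series (fun k => Rabs (coef_b k)).
Proof.
  apply (@ex_series_le R_AbsRing R_CompleteNormedModule) with coef_size.
  - intros k. change (norm ?x) with (Rabs x). rewrite Rabs_Rabsolu. apply Rabs_coef_b_le.
  - apply ex_series_coef_size.
Qed.

(* Found by summing the recurrences by parts against the Wallis weights. *)
Definition wallis_remainder (n : nat) : R :=
  wallis n * ((4 / 5 * INR n - 1) * coef_a n + 4 / 5 * INR n * coef_b n).

Lemma wallis_remainder_step n : (1 <= n)%nat ->
  wallis_remainder n - wallis_remainder (S n) = coef_a (S n) * wallis (S n).
Proof.
  intros Hn. assert (Hs : source n = 0) by (destruct n; [lia|reflexivity]).
  unfold wallis_remainder. cbn [wallis]. destruct (coef_S n) as [-> ->]. rewrite Hs, S_INR.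
  pose proof (cramer_det_pos n). pose proof (pos_INR n). unfold cramer_det in *.
  field. lra.
Qed.

Lemma sum_n_coef_a_wallis n : (1 <= n)%nat ->
  A - wallis_remainder n = sum_n (fun k => coef_a k * wallis k) n.
Proof.
  intros Hn. induction n as [|n IH]; [lia|].
  destruct (Nat.eq_dec n 0) as [->|Hn0].
  - rewrite sum_Sn, sum_O. change (plus ?x ?y) with (x + y).
    unfold wallis_remainder. destruct (coef_S 0) as [-> ->].
    unfold cramer_det. cbn [wallis coef_a coef_b coef fst snd source INR]. field.
  - rewrite sum_Sn, <- IH by lia. change (plus ?x ?y) with (x + y).
    pose proof (wallis_remainder_step n ltac:(lia)). lra.
Qed.

Lemma Rabs_wallis_remainder_le n : (1 <= n)%nat ->
  Rabs (wallis_remainder n) <= 5 * coef_moment n * wallis n.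
Proof.
  intros Hn. assert (HN : 1 <= INR n) by (apply (le_INR 1), Hn).
  pose proof (wallis_range n). pose proof (coef_size_nonneg n).
  pose proof (Rabs_coef_a_le n). pose proof (Rabs_coef_b_le n).
  assert (Hbracket : Rabs ((4 / 5 * INR n - 1) * coef_a n + 4 / 5 * INR n * coef_b n)
                     <= 10 * INR n * coef_size n).
  { eapply Rle_trans; [apply Rabs_triang|].
    rewrite (Rabs_mult (4 / 5 * INR n - 1)), (Rabs_mult (4 / 5 * INR n)),
      (Rabs_pos_eq (4 / 5 * INR n)) by lra.
    assert (Rabs (4 / 5 * INR n - 1) <= 4 / 5 * INR n + 1) by (apply Rabs_le; lra).
    pose proof (Rabs_pos (4 / 5 * INR n - 1)). pose proof (Rabs_pos (coef_a n)).
    assert (0 <= 4 / 5 * INR n * (coef_size n - Rabs (coef_b n))) by (apply Rmult_le_pos; lra).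
    nra. }
  unfold wallis_remainder, coef_moment. rewrite Rabs_mult, (Rabs_pos_eq (wallis n)) by lra.
  pose proof (Rabs_pos ((4 / 5 * INR n - 1) * coef_a n + 4 / 5 * INR n * coef_b n)). nra.
Qed.

Lemma is_lim_seq_wallis_remainder : is_lim_seq wallis_remainder 0.
Proof.
  set (C := 5 * coef_moment 99).
  apply is_lim_seq_le_le_loc with (fun n => - (C * wallis n)) (fun n => C * wallis n).
  - exists 99%nat. intros n Hn.
    pose proof (Rabs_wallis_remainder_le n ltac:(lia)).
    pose proof (coef_moment_le n Hn). pose proof (wallis_range n).
    apply Rabs_le_between. unfold C. nra.
  - replace (Finite 0) with (Rbar_opp (Rbar_mult C 0)) by (simpl; f_equal; ring).
    apply -> is_lim_seq_opp. apply is_lim_seq_scal_l, is_lim_seq_wallis.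
  - replace (Finite 0) with (Rbar_mult C 0) by (simpl; f_equal; ring).
    apply is_lim_seq_scal_l, is_lim_seq_wallis.
Qed.

Lemma is_series_coef_a_wallis : is_series (fun k => coef_a k * wallis k) A.
Proof.
  assert (Hlim : is_lim_seq (fun n => A - wallis_remainder n) A).
  { replace (Finite A) with (Rbar_minus A 0) by (simpl; f_equal; ring).
    apply is_lim_seq_minus'; [apply is_lim_seq_const|apply is_lim_seq_wallis_remainder]. }
  apply (is_lim_seq_ext_loc _ _ _ (ex_intro _ 1%nat sum_n_coef_a_wallis) Hlim).
Qed.

Lemma is_pseries_source x : is_pseries source x (10 * A).
Proof.
  apply is_pseries_R. unfold is_series.
  apply (filterlim_ext (fun _ => 10 * A)); [|apply filterlim_const].
  intros n. induction n as [|n IH].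
  - rewrite sum_O. simpl. ring.
  - rewrite sum_Sn, <- IH. change (plus ?x ?y) with (x + y). simpl source. ring.
Qed.

Lemma profile_eq_a x : Rabs x < 1 ->
  8 * (1 - x) * PSeries (fun n => INR n * coef_a n) x + 6 * PSeries coef_a x
  - 13 * PSeries coef_b x = 0.
Proof.
  intros Hx.
  pose proof (is_pseries_PSeries _ _ ex_series_Rabs_coef_a Hx) as Ha.
  pose proof (is_pseries_PSeries _ _ ex_series_Rabs_coef_b Hx) as Hb.
  pose proof (is_pseries_euler _ _ ex_series_Rabs_coef_a Hx) as HEa.
  pose proof (is_pseries_lin _ _ _ _ _ 1 (-1) (is_pseries_lin _ _ _ _ _ 8 6 HEa Ha)
                (is_pseries_lin _ _ _ _ _ 8 13 (is_pseries_incr_1 _ _ _ HEa) Hb)) as H.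
  assert (H0 : forall n, 1 * (8 * (INR n * coef_a n) + 6 * coef_a n)
                         + -1 * (8 * PS_incr_1 (fun k => INR k * coef_a k) n + 13 * coef_b n) = 0).
  { intros n. pose proof (coef_a_rec n). lra. }
  rewrite <- (is_pseries_0 _ _ _ H0 H).
  unfold scal; simpl; unfold mult; simpl. ring.
Qed.

Lemma profile_eq_b x : Rabs x < 1 ->
  8 * (1 - x) * PSeries (fun n => INR n * coef_b n) x + 9 * PSeries coef_b x
  - 10 * (1 - x) * PSeries coef_a x - 10 * x * A = 0.
Proof.
  intros Hx.
  pose proof (is_pseries_PSeries _ _ ex_series_Rabs_coef_a Hx) as Ha.
  pose proof (is_pseries_PSeries _ _ ex_series_Rabs_coef_b Hx) as Hb.
  pose proof (is_pseries_euler _ _ ex_series_Rabs_coef_b Hx) as HEb.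
  pose proof (is_pseries_lin _ _ _ _ _ 1 1
                (is_pseries_lin _ _ _ _ _ 8 (-8) HEb (is_pseries_incr_1 _ _ _ HEb))
                (is_pseries_lin _ _ _ _ _ 1 (-1)
                   (is_pseries_lin _ _ _ _ _ 9 (-10) Hb Ha)
                   (is_pseries_lin _ _ _ _ _ (-10) 1 (is_pseries_incr_1 _ _ _ Ha)
                      (is_pseries_incr_1 _ _ _ (is_pseries_source x))))) as H.
  assert (H0 : forall n,
             1 * (8 * (INR n * coef_b n) + -8 * PS_incr_1 (fun k => INR k * coef_b k) n)
             + 1 * (1 * (9 * coef_b n + -10 * coef_a n)
                    + -1 * (-10 * PS_incr_1 coef_a n + 1 * PS_incr_1 source n)) = 0).
  { intros n. pose proof (coef_b_rec n). lra. }
  rewrite <- (is_pseries_0 _ _ _ H0 H).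
  unfold scal; simpl; unfold mult; simpl. ring.
Qed.

End Coefficients.

Theorem lemma3p1 :
  exists a b : nat -> R,
    ex_series (fun k => Rabs (a k)) /\
    ex_series (fun k => Rabs (b k)) /\
    exists I : R,
      is_RInt_gen (fun g => Gbar a g / (1 + g ^ 2)) (at_point 0) (Rbar_locally p_infty) I /\
      2 / PI * I = - (351 / 19) /\
      forall g : R, 0 <= g ->
        ex_derive (Gbar a) g /\ ex_derive (Gbar b) g /\
        4 * g * Derive (Gbar a) g + 6 * Gbar a g - 13 * Gbar b g = 0 /\
        4 * g * Derive (Gbar b) g + 9 * Gbar b g
          - 10 / (1 + g ^ 2) * (Gbar a g + g ^ 2 * (2 / PI * I)) = 0.
Proof.
  set (A := - (351 / 19)).
  pose proof (ex_series_Rabs_coef_a A) as Ha. pose proof (ex_series_Rabs_coef_b A) as Hb.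
  exists (coef_a A), (coef_b A). split; [exact Ha|]. split; [exact Hb|].
  exists (PI / 2 * Series (fun k => coef_a A k * wallis k)).
  assert (HI : 2 / PI * (PI / 2 * Series (fun k => coef_a A k * wallis k)) = A).
  { rewrite (is_series_unique _ _ (is_series_coef_a_wallis A)). field. apply PI_neq0. }
  split; [exact (is_RInt_gen_Gbar _ Ha)|]. split; [exact HI|].
  intros g _. rewrite HI.
  split; [eexists; exact (is_derive_Gbar _ g Ha)|].
  split; [eexists; exact (is_derive_Gbar _ g Hb)|].
  assert (Hxi : 10 / (1 + g ^ 2) = 10 * (1 - xi g) /\ (1 - xi g) * g ^ 2 = xi g).
  { pose proof (one_plus_sqr_pos g). unfold xi. split; field; lra. }
  rewrite !Gbar_euler, !Gbar_PSeries by assumption.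
  pose proof (profile_eq_a A _ (Rabs_xi_lt_1 g)). pose proof (profile_eq_b A _ (Rabs_xi_lt_1 g)).
  split; [lra|].
  rewrite (proj1 Hxi).
  replace (10 * (1 - xi g) * (PSeries (coef_a A) (xi g) + g ^ 2 * A))
    with (10 * (1 - xi g) * PSeries (coef_a A) (xi g) + 10 * ((1 - xi g) * g ^ 2) * A) by ring.
  rewrite (proj2 Hxi). lra.
Qed.
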